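(* Let $\mathcal{F}$ be a real inner product space with inner product $\langle\cdot,\cdot\rangle$, let $\mathcal{K}:\mathcal{F}\to\mathcal{F}$ be linear, and let $\mathcal{S}\subset\mathcal{F}$ be a subspace with $\dim\mathcal{S}=\dim\mathcal{K}\mathcal{S}=s$. Let $0\le\theta_1\le\dots\le\theta_s\le\pi/2$ be the principal angles between $\mathcal{S}$ and $\mathcal{K}\mathcal{S}$ in increasing order, with principal vectors $u^{\mathcal{S}}_1,\dots,u^{\mathcal{S}}_s\in\mathcal{S}$ and $\mathcal{K}v^{\mathcal{K}\mathcal{S}}_1,\dots,\mathcal{K}v^{\mathcal{K}\mathcal{S}}_s\in\mathcal{K}\mathcal{S}$ (orthonormal families with $\langle u^{\mathcal{S}}_i,\mathcal{K}v^{\mathcal{K}\mathcal{S}}_j\rangle=\delta_{ij}\cos\theta_i$). Let $\Lambda_{\cos}=\mathrm{diag}(\cos\theta_1,\dots,\cos\theta_s)$ and $\Lambda_{\sin}=\mathrm{diag}(\sin\theta_1,\dots,\sin\theta_s)$. Let $\mathcal{S}^{\mathrm{new}}=\mathrm{span}(u^{\mathcal{S}}_1,\dots,u^{\mathcal{S}}_{s-1})$, so $\mathcal{K}\mathcal{S}^{\mathrm{new}}=\mathrm{span}(\mathcal{K}u^{\mathcal{S}}_1,\dots,\mathcal{K}u^{\mathcal{S}}_{s-1})$. Let $WR=[\mathcal{K}u^{\mathcal{S}}_1,\dots,\mathcal{K}u^{\mathcal{S}}_s]$ be a thin QR decomposition, with $W=[w_1,\dots,w_s]$ orthonormal elements of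 $\mathcal{F}$ and $R\in\mathbb{R}^{s\times s}$ upper triangular, and set $\omega=w_s$. Write $\omega=\sum_{i=1}^s d^{\omega}_i\,\mathcal{K}v^{\mathcal{K}\mathcal{S}}_i$ and $d^\omega=[d^\omega_1,\dots,d^\omega_s]^\top$. Define $N_1=\Lambda_{\sin}^2+\Lambda_{\cos}d^\omega(\Lambda_{\cos}d^\omega)^\top\in\mathbb{R}^{s\times s}$, and let $\tilde N_1\in\mathbb{R}^{(s-1)\times(s-1)}$ be obtained by deleting the last row and column of $N_1$. Let $(\lambda_\alpha,z_\alpha)_{\alpha=1}^{s-1}$ be the eigenpairs of $\tilde N_1$ with $\lambda_1\le\dots\le\lambda_{s-1}$ and $z_\alpha$ orthonormal. Then, for every $\alpha=1,\dots,s-1$, $$\sin^2\theta_\alpha(\mathcal{S}^{\mathrm{new}},\mathcal{K}\mathcal{S}^{\mathrm{new}})=\lambda_\alpha,\qquad u^{\mathcal{S}^{\mathrm{new}}}_\alpha=\mathcal{U}_{s-1}z_\alpha,$$ where $\mathcal{U}_{s-1}=[u^{\mathcal{S}}_1,\dots,u^{\mathcal{S}}_{s-1}]$ (so $\mathcal{U}_{s-1}z_\alpha=\sum_{j=1}^{s-1}(z_\alpha)_j u^{\mathcal{S}}_j$) and $\{u^{\mathcal{S}^{\mathrm{new}}}_\alpha\}$ are principal vectors of $\mathcal{S}^{\mathrm{new}}$ with respect to $\mathcal{K}\mathcal{S}^{\mathrm{new}}$.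
   Context: Principal angles and vectors between subspaces $\mathcal{U},\mathcal{V}$ of an inner product space with $k=\min\{\dim\mathcal{U},\dim\mathcal{V}\}$: angles $0\le\theta_1\le\dots\le\theta_k\le\pi/2$ defined recursively by $\cos\theta_j=\max|\langle u,v\rangle|$ over unit $u\in\mathcal{U}$, $v\in\mathcal{V}$ with $u$ orthogonal to $u_1,\dots,u_{j-1}$ and $v$ orthogonal to $v_1,\dots,v_{j-1}$; the maximizers $(u_j,v_j)$ are the $j$-th pair of principal vectors. A thin QR decomposition of a tuple $[f_1,\dots,f_s]$ of elements of $\mathcal{F}$ is $f_j=\sum_{i\le j}R_{ij}w_i$ with $w_1,\dots,w_s$ orthonormal (Gram–Schmidt). *)

From HB Require Import structures.
From mathcomp Require Import all_boot all_order all_algebra.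
From mathcomp Require Import all_classical all_reals all_analysis.
Set Implicit Arguments. Unset Strict Implicit. Unset Printing Implicit Defensive.
Import Order.TTheory GRing.Theory Num.Theory.
Local Open Scope ring_scope.
Local Open Scope classical_set_scope.

Section InnerProductSpaces.
Variables (R : realType) (V : lmodType R).

Definition inner_product (ip : V -> V -> R) : Prop :=
  [/\ forall x y, ip x y = ip y x,
      forall (a : R) x y z, ip (a *: x + y) z = a * ip x z + ip y z,
      forall x, 0 <= ip x x &
      forall x, ip x x = 0 -> x = 0].

Definition span_of (k : nat) (b : 'I_k -> V) : set V :=
  [set x | exists c : 'I_k -> R, x = \sum_(i < k) c i *: b i].

Definition free_fam (k : nat) (b : 'I_k -> V) : Prop :=
  forall c : 'I_k -> R, \sum_(i < k) c i *: b i = 0 -> forall i, c i = 0.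

Definition has_dim (S : set V) (k : nat) : Prop :=
  exists b : 'I_k -> V, free_fam b /\ S = span_of b.

(* (th, u, w) is a system of k principal angles / principal vectors between
   the subspaces U and W, following the recursive definition:
   cos th_j = max |<x,y>| over unit x in U, y in W with x orthogonal to
   u_1..u_{j-1} and y orthogonal to w_1..w_{j-1}; (u_j, w_j) is a maximizer. *)
Definition principal_system (ip : V -> V -> R) (U W : set V) (k : nat)
    (th : 'I_k -> R) (u w : 'I_k -> V) : Prop :=
  forall j : 'I_k,
  [/\ 0 <= th j <= pi / 2,
      U (u j) /\ W (w j),
      ip (u j) (u j) = 1 /\ ip (w j) (w j) = 1,
      (forall i : 'I_k, (i < j)%N -> ip (u j) (u i) = 0 /\ ip (w j) (w i) = 0) &
      `|ip (u j) (w j)| = cos (th j) /\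
      (forall x y, U x -> W y -> ip x x = 1 -> ip y y = 1 ->
         (forall i : 'I_k, (i < j)%N -> ip x (u i) = 0 /\ ip y (w i) = 0) ->
         `|ip x y| <= cos (th j))].

End InnerProductSpaces.

(* In the orthonormal bases [u_1 .. u_(s-1)] of [S_new] and [w_1 .. w_(s-1)]
   of [K S_new] (a basis because [R] is triangular and invertible), a principal
   system of [(S_new, K S_new)] is the same thing as a recursive singular system
   of the cross Gram matrix [M = (<u_j, w_i>)], the cosines of the angles being
   the singular values.  Writing [w_i = sum_k Q_ik K v_k] with [Q] orthogonal
   gives [<u_j, w_i> = Q_ij cos th_j]; as the deleted last row of [Q] is
   [d^omega], orthogonality of the columns of [Q] yields [M M^T = I - N1~].
   The squared singular values of any singular system are eigenvalues of
   [M M^T] listed in decreasing order, hence equal to [1 - lam_alpha] by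
   Courant-Fischer; conversely the orthonormal eigenvectors [z_alpha] of
   [M M^T] are the left vectors of a singular system. *)

From HB Require Import structures.
From mathcomp Require Import all_boot all_order all_algebra.
From mathcomp Require Import all_classical all_reals all_analysis.
From mathcomp Require Import ring lra.
Import Order.TTheory GRing.Theory Num.Theory.
Set Implicit Arguments. Unset Strict Implicit. Unset Printing Implicit Defensive.
Local Open Scope ring_scope.
Local Open Scope classical_set_scope.

(** * Inner products and orthonormal families *)

Section InnerProduct.
Variables (R : realType) (V : lmodType R) (ip : V -> V -> R).
Hypothesis hip : inner_product ip.

Lemma ipC x y : ip x y = ip y x. Proof. by case: hip. Qed.

Lemma ip_ge0 x : 0 <= ip x x. Proof. by case: hip. Qed.

Lemma ip_eq0 x : ip x x = 0 -> x = 0. Proof. by case: hip => _ _ _; apply. Qed.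

Lemma ip_gt0 x : x != 0 -> 0 < ip x x.
Proof. by move=> x0; rewrite lt_def ip_ge0 andbT; apply: contra_neq x0; apply: ip_eq0. Qed.

Lemma ipDl x y z : ip (x + y) z = ip x z + ip y z.
Proof. by case: hip => _ /(_ 1 x y z) + _ _; rewrite scale1r mul1r. Qed.

Lemma ip0l z : ip 0 z = 0.
Proof. by have := ipDl 0 0 z; rewrite addr0; lra. Qed.

Lemma ipZl a x z : ip (a *: x) z = a * ip x z.
Proof. by case: hip => _ /(_ a x 0 z) + _ _; rewrite addr0 ip0l addr0. Qed.

Lemma ipNl x z : ip (- x) z = - ip x z.
Proof. by rewrite -scaleN1r ipZl mulN1r. Qed.

Lemma ipDr x y z : ip z (x + y) = ip z x + ip z y.
Proof. by rewrite ipC ipDl !(ipC z). Qed.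

Lemma ipZr a x z : ip z (a *: x) = a * ip z x.
Proof. by rewrite ipC ipZl ipC. Qed.

Lemma ipNr x z : ip z (- x) = - ip z x.
Proof. by rewrite ipC ipNl ipC. Qed.

Lemma ip0r z : ip z 0 = 0. Proof. by rewrite ipC ip0l. Qed.

Lemma ip_suml I (r : seq I) (P : pred I) (F : I -> V) z :
  ip (\sum_(i <- r | P i) F i) z = \sum_(i <- r | P i) ip (F i) z.
Proof. by elim/big_rec2: _ => [|i y1 y2 _ <-]; rewrite ?ip0l ?ipDl. Qed.

Lemma ip_sumr I (r : seq I) (P : pred I) (F : I -> V) z :
  ip z (\sum_(i <- r | P i) F i) = \sum_(i <- r | P i) ip z (F i).
Proof. by rewrite ipC ip_suml; apply: eq_bigr => i _; rewrite ipC. Qed.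

Lemma cauchy_schwarz x y : ip x y ^+ 2 <= ip x x * ip y y.
Proof.
have [->|x0] := eqVneq x 0; first by rewrite !ip0l expr0n mul0r.
have := ip_ge0 (ip x x *: y - ip x y *: x).
rewrite !(ipDl, ipDr, ipNl, ipNr, ipZl, ipZr) (ipC y x) => h.
have : 0 <= ip x x * (ip x x * ip y y - ip x y ^+ 2) by nra.
by rewrite pmulr_rge0 ?ip_gt0 // subr_ge0.
Qed.

Lemma ip_normalize x : x != 0 ->
  ip ((Num.sqrt (ip x x))^-1 *: x) ((Num.sqrt (ip x x))^-1 *: x) = 1.
Proof.
move=> x0; have xx := ip_gt0 x0; rewrite ipZl ipZr -{3}(sqr_sqrtr (ltW xx)).
by field; rewrite gt_eqF ?sqrtr_gt0.
Qed.

Lemma mem_span_of k (b : 'I_k -> V) i : span_of b (b i).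
Proof.
exists (fun j => (j == i)%:R); rewrite (bigD1 i) //= eqxx scale1r big1 ?addr0 //.
by move=> j /negbTE->; rewrite scale0r.
Qed.

Definition orthonormal_fam k (f : 'I_k -> V) := forall i j, ip (f i) (f j) = (i == j)%:R.

Lemma orthonormal_lt k (f : 'I_k -> V) : (forall j, ip (f j) (f j) = 1) ->
  (forall i j : 'I_k, (i < j)%N -> ip (f j) (f i) = 0) -> orthonormal_fam f.
Proof.
move=> f1 f0 i j; have [ij|ji|/val_inj->] := ltngtP i j; last by rewrite f1 eqxx.
- by rewrite ipC f0 // -val_eqE ltn_eqF.
- by rewrite f0 // -val_eqE gtn_eqF.
Qed.

Section Orthonormal.
Variables (k : nat) (f : 'I_k -> V).
Hypothesis hf : orthonormal_fam f.

Lemma orthonormal_neq0 i : f i != 0.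
Proof. by apply/eqP => fi0; have /eqP := hf i i; rewrite fi0 ip0l eqxx eq_sym oner_eq0. Qed.

Lemma orthonormal_comp m (h : 'I_m -> 'I_k) : injective h -> orthonormal_fam (f \o h).
Proof. by move=> h_inj i j; rewrite /= hf (inj_eq h_inj). Qed.

Lemma orthonormal_coef (c : 'I_k -> R) j : ip (\sum_i c i *: f i) (f j) = c j.
Proof.
rewrite ip_suml (bigD1 j) //= big1 ?addr0 => [|i ij]; first by rewrite ipZl hf eqxx mulr1.
by rewrite ipZl hf (negbTE ij) mulr0.
Qed.

Lemma orthonormal_neq i j : i != j -> ip (f i) (f j) = 0.
Proof. by move=> ij; rewrite hf (negbTE ij). Qed.

Lemma orthonormal_ip_sum (c d : 'I_k -> R) :
  ip (\sum_i c i *: f i) (\sum_i d i *: f i) = \sum_i c i * d i.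
Proof.
by rewrite ip_sumr; apply: eq_bigr => i _; rewrite ipZr orthonormal_coef mulrC.
Qed.

Lemma orthonormal_expand (c : 'I_k -> R) t :
  t = \sum_i c i *: f i -> t = \sum_i ip t (f i) *: f i.
Proof. by move=> ->; apply: eq_bigr => i _; rewrite orthonormal_coef. Qed.

Lemma parseval t : t = \sum_i ip t (f i) *: f i -> ip t t = \sum_i ip t (f i) ^+ 2.
Proof. by move=> tE; rewrite [in LHS]tE orthonormal_ip_sum. Qed.

(* The coefficient matrix [A] of [f] in [b] satisfies [A G A^T = 1] for the
   Gram matrix [G] of [b], so [A] is invertible. *)
Lemma sub_span_orthonormal (b : 'I_k -> V) :
  (forall i, span_of b (f i)) -> span_of b `<=` span_of f.
Proof.
move=> fb t [a ->].
have /choice [Af hA] : forall i, exists c : 'I_k -> R, f i = \sum_j c j *: b j.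
  by move=> i; have [c ->] := fb i; exists c.
pose A : 'M[R]_k := \matrix_(i, j) Af i j.
pose G : 'M[R]_k := \matrix_(j, l) ip (b j) (b l).
have AGA : A *m G *m A^T = 1%:M.
  apply/matrixP => i l; rewrite [RHS]mxE -hf hA hA ip_suml -mulmxA mxE.
  apply: eq_bigr => j _; rewrite !mxE ipZl ip_sumr; congr (_ * _).
  by apply: eq_bigr => m _; rewrite !mxE ipZr mulrC.
have Au : A \in unitmx.
  rewrite unitmxE unitfE; apply/eqP => dA; have /eqP := congr1 determinant AGA.
  by rewrite !det_mulmx dA !mul0r det1 eq_sym oner_eq0.
pose be := (\row_j a j) *m invmx A.
exists (fun i => be 0 i).
transitivity (\sum_i \sum_j (be 0 i * Af i j) *: b j); last first.
  by apply: eq_bigr => i _; rewrite hA scaler_sumr; apply: eq_bigr => j _; rewrite scalerA.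
rewrite exchange_big; apply: eq_bigr => j _.
have /matrixP /(_ 0 j) := mulmxKV Au (\row_j a j); rewrite !mxE => <-.
by rewrite scaler_suml; apply: eq_bigr => i _; rewrite [A i j]mxE.
Qed.

Lemma has_dim_sub_span (S : set V) : has_dim S k -> (forall i, S (f i)) -> S `<=` span_of f.
Proof. by move=> [b [_ ->]]; apply: sub_span_orthonormal. Qed.

End Orthonormal.
End InnerProduct.

(** * Spectral comparison on column vectors *)

Lemma linear_quadratic_le0 (R : realFieldType) (a b : R) :
  (forall t, a * t + b * t ^+ 2 <= 0) -> a = 0.
Proof.
move=> H; pose D := 1 + b ^+ 2.
have D0 : 0 < D by rewrite ltr_pwDl ?sqr_ge0.
have Db : 0 < D + b by rewrite /D; nra.
have := H (a / D); have -> : a * (a / D) + b * (a / D) ^+ 2 = a ^+ 2 * (D + b) / D ^+ 2.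
  by field; rewrite gt_eqF.
rewrite pmulr_lle0 ?invr_gt0 ?exprn_gt0 // pmulr_lle0 // => a2.
by apply/eqP; rewrite -sqrf_eq0 eq_le a2 sqr_ge0.
Qed.

Section DotProduct.
Variable R : realType.

Definition dot n (x y : 'cV[R]_n) : R := \sum_i x i 0 * y i 0.

Lemma dotE n (x y : 'cV[R]_n) : dot x y = (x^T *m y) 0 0.
Proof. by rewrite /dot mxE; apply: eq_bigr => i _; rewrite mxE. Qed.

Lemma dot_inner_product n : inner_product (@dot n).
Proof.
split=> [x y|a x y z|x|x].
- by apply: eq_bigr => i _; rewrite mulrC.
- by rewrite /dot mulr_sumr -big_split; apply: eq_bigr => i _; rewrite !mxE mulrDl mulrA.
- by apply: sumr_ge0 => i _; rewrite -expr2 sqr_ge0.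
- move=> /eqP; rewrite psumr_eq0 => [/allP x0|i _]; last by rewrite -expr2 sqr_ge0.
  apply/matrixP => i j; rewrite (ord1 j) mxE.
  by have := x0 i (mem_index_enum i); rewrite -expr2 sqrf_eq0 => /eqP.
Qed.

Lemma dot_mulmx n (A : 'M[R]_n) x y : dot x (A *m y) = dot (A^T *m x) y.
Proof. by rewrite !dotE trmx_mul trmxK mulmxA. Qed.

End DotProduct.
Arguments dot {R n} x y.

Section Spectral.
Variables (R : realType) (n : nat).
Implicit Types (x : 'cV[R]_n) (f g : 'I_n -> 'cV[R]_n) (P : 'M[R]_n).
Let dotP := dot_inner_product R n.

Lemma orthonormal_cV_expand f :
  orthonormal_fam dot f -> forall x, x = \sum_i dot x (f i) *: f i.
Proof.
have delta_span x : span_of (fun i => delta_mx i 0) x.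
  exists (fun i => x i 0); apply/matrixP => i j; rewrite (ord1 j) summxE (bigD1 i) //=.
  rewrite big1 ?addr0 => [|l li]; first by rewrite !mxE !eqxx mulr1.
  by rewrite !mxE eq_sym (negbTE li) mulr0.
move=> hf x.
have [c xE] := sub_span_orthonormal dotP hf (fun i => delta_span (f i)) (delta_span x).
exact (orthonormal_expand dotP hf xE).
Qed.

Lemma rayleigh P f (al : 'I_n -> R) x : orthonormal_fam dot f ->
  (forall i, P *m f i = al i *: f i) ->
  dot x (P *m x) = \sum_i al i * dot x (f i) ^+ 2.
Proof.
move=> hf Pf; rewrite {1 2}(orthonormal_cV_expand hf x) mulmx_sumr.
under [X in dot _ X]eq_bigr do rewrite -scalemxAr Pf scalerA.
by rewrite (orthonormal_ip_sum dotP hf); apply: eq_bigr => i _; ring.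
Qed.

Lemma exists_orth_nonzero (h : 'I_n -> 'cV[R]_n) (j : 'I_n) :
  exists2 x, x != 0 & forall k, k != j -> dot x (h k) = 0.
Proof.
pose A : 'M[R]_n := \matrix_(k, i) (if k == j then 0 else h k i 0).
have /det0P [v v0 vA] : \det A^T == 0.
  by rewrite det_tr (expand_det_row _ j) big1 // => i _; rewrite mxE eqxx mul0r.
exists v^T; first by rewrite trmx_eq0.
move=> k kj; have /matrixP /(_ k 0) := congr1 trmx vA.
rewrite trmx_mul trmxK !mxE => <-; apply: eq_bigr => i _.
by rewrite !mxE (negbTE kj) mulrC.
Qed.

Lemma orthonormal_extend (J : pred 'I_n) f :
  (forall a b, J a -> J b -> dot (f a) (f b) = (a == b)%:R) ->
  exists2 g, orthonormal_fam dot g & forall a, J a -> g a = f a.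
Proof.
have [m hm] : exists m, #|[pred a | ~~ J a]| = m by eexists.
elim: m J f hm => [|m IH] J f hm hf.
  have Ja a : J a by have := card0_eq hm a; rewrite !inE; case: (J a).
  by exists f => // a b; apply: hf.
have [k0 Jk0] : exists k0, ~~ J k0.
  have /card_gt0P [k0 Jk0] : (0 < #|[pred a | ~~ J a]|)%N by rewrite hm.
  by exists k0.
have [x x0 hx] := exists_orth_nonzero (fun k => if J k then f k else 0) k0.
pose x1 := (Num.sqrt (dot x x))^-1 *: x.
have fx1 a : J a -> dot (f a) x1 = 0.
  move=> Ja; have /hx : a != k0 by apply: contraNneq Jk0 => <-.
  by rewrite Ja /x1 (ipZr dotP) (ipC dotP) => ->; rewrite mulr0.
pose f' a := if a == k0 then x1 else f a.
pose J' := [pred a | (a == k0) || J a].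
have hm' : #|[pred a | ~~ J' a]| = m.
  have := cardD1 k0 [pred a | ~~ J a]; rewrite hm inE Jk0 add1n => -[->].
  by apply: eq_card => a; rewrite !inE negb_or.
have [g hg gf] : exists2 g, orthonormal_fam dot g & forall a, J' a -> g a = f' a.
  apply: (IH J' f' hm') => a b; rewrite /J' /f' !inE.
  case: (eqVneq a k0) => [->|ak] /=; case: (eqVneq b k0) => [->|bk] //= Ja Jb.
  - exact (ip_normalize dotP x0).
  - by rewrite (ipC dotP) fx1.
  - by rewrite fx1 // (negbTE ak).
  - exact: hf.
exists g => // a Ja; rewrite gf /f' ?inE ?Ja ?orbT //.
by case: eqP => // ak; move: Jk0; rewrite -ak Ja.
Qed.

(* Courant–Fischer: a nonzero [x] in the span of the first [j+1] vectors of
   [f] and orthogonal to the first [j] vectors of [g] has Rayleigh quotient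
   at least [al j] and at most [be j]. *)
Lemma eigen_le P f g (al be : 'I_n -> R) :
  orthonormal_fam dot f -> orthonormal_fam dot g ->
  (forall i, P *m f i = al i *: f i) -> (forall i, P *m g i = be i *: g i) ->
  (forall i j : 'I_n, (i <= j)%N -> al j <= al i) ->
  (forall i j : 'I_n, (i <= j)%N -> be j <= be i) ->
  forall j, al j <= be j.
Proof.
move=> hf hg Pf Pg al_dec be_dec j.
have [x x0 hx] := exists_orth_nonzero (fun k => if (k < j)%N then g k else f k) j.
have hxg (k : 'I_n) : (k < j)%N -> dot x (g k) = 0.
  by move=> kj; have := hx k; rewrite kj; apply; apply: contraTneq kj => ->; rewrite ltnn.
have hxf (k : 'I_n) : (j < k)%N -> dot x (f k) = 0.
  move=> jk; have := hx k; rewrite ltnNge (ltnW jk); apply.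
  by apply: contraTneq jk => ->; rewrite ltnn.
rewrite -(ler_pM2r (ip_gt0 dotP x0)); apply: (@le_trans _ _ (dot x (P *m x))).
  rewrite (rayleigh x hf Pf) (parseval dotP hf (orthonormal_cV_expand hf x)) mulr_sumr.
  apply: ler_sum => i _; have [ij|ji] := leqP i j; first by rewrite ler_wpM2r ?sqr_ge0 ?al_dec.
  by rewrite hxf // expr0n !mulr0.
rewrite (rayleigh x hg Pg) (parseval dotP hg (orthonormal_cV_expand hg x)) mulr_sumr.
apply: ler_sum => i _; have [ij|ji] := ltnP i j; last by rewrite ler_wpM2r ?sqr_ge0 ?be_dec.
by rewrite hxg // expr0n !mulr0.
Qed.

End Spectral.

(** * Singular systems of a square matrix *)

Section SingularSystem.
Variables (R : realType) (n : nat).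
Implicit Types (x y : 'cV[R]_n) (c e z : 'I_n -> 'cV[R]_n) (M : 'M[R]_n).
Let dotP := dot_inner_product R n.

(* The matrix counterpart of [principal_system]: the same recursive
   maximisation, for the bilinear form [x^T M y] on all of ['cV_n]. *)
Definition singular_system M (mu : 'I_n -> R) c e :=
  forall j, [/\ dot (c j) (c j) = 1, dot (e j) (e j) = 1,
   (forall i : 'I_n, (i < j)%N -> dot (c j) (c i) = 0 /\ dot (e j) (e i) = 0),
   `|dot (c j) (M *m e j)| = mu j &
   forall x y, dot x x = 1 -> dot y y = 1 ->
     (forall i : 'I_n, (i < j)%N -> dot x (c i) = 0 /\ dot y (e i) = 0) ->
     `|dot x (M *m y)| <= mu j].

Section Properties.
Variables (M : 'M[R]_n) (mu : 'I_n -> R) (c e : 'I_n -> 'cV[R]_n).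
Hypothesis hs : singular_system M mu c e.

Lemma singular_system_tr : singular_system M^T mu e c.
Proof.
move=> j; have [c1 e1 ce0 mu_j mu_max] := hs j; split => //.
- by move=> i /ce0[].
- by rewrite dot_mulmx trmxK (ipC dotP).
- move=> x y x1 y1 xy0; rewrite dot_mulmx trmxK (ipC dotP).
  by apply: mu_max => // i /xy0[-> ->].
Qed.

Lemma singular_system_orthonormal : orthonormal_fam dot c.
Proof.
apply: (orthonormal_lt dotP) => [j|i j ij]; have [c1 _ ce0 _ _] := hs j; first exact: c1.
exact: (ce0 i ij).1.
Qed.

Lemma singular_system_nonincr (i j : 'I_n) : (i <= j)%N -> mu j <= mu i.
Proof.
move=> ij; have [c1 e1 ce0 <- _] := hs j; have [_ _ _ _ mu_max] := hs i.
by apply: mu_max => // k ki; apply: ce0; apply: leq_trans ki ij.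
Qed.

Lemma singular_system_bound (j : 'I_n) x y :
  (forall i : 'I_n, (i < j)%N -> dot x (c i) = 0 /\ dot y (e i) = 0) ->
  dot x (M *m y) ^+ 2 <= mu j ^+ 2 * dot x x * dot y y.
Proof.
move=> xy0; have [_ _ _ mu_j mu_max] := hs j.
have [->|x0] := eqVneq x 0; first by rewrite !(ip0l dotP) expr0n mulr0 mul0r.
have [->|y0] := eqVneq y 0; first by rewrite mulmx0 !(ip0r dotP) expr0n !mulr0.
pose sx : R := Num.sqrt (dot x x); pose sy : R := Num.sqrt (dot y y).
have sx0 : 0 < sx by rewrite sqrtr_gt0 (ip_gt0 dotP).
have sy0 : 0 < sy by rewrite sqrtr_gt0 (ip_gt0 dotP).
have xy1 (i : 'I_n) : (i < j)%N -> dot (sx^-1 *: x) (c i) = 0 /\ dot (sy^-1 *: y) (e i) = 0.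
  by move=> /xy0 [xc ye]; rewrite !(ipZl dotP) xc ye !mulr0.
have := mu_max _ _ (ip_normalize dotP x0) (ip_normalize dotP y0) xy1.
rewrite -scalemxAr (ipZl dotP) (ipZr dotP).
have -> : sx^-1 * (sy^-1 * dot x (M *m y)) = dot x (M *m y) / (sx * sy).
  by rewrite invfM; ring.
have sxy0 : 0 < sx * sy by rewrite mulr_gt0.
rewrite normf_div (gtr0_norm sxy0) ler_pdivrMr // => le_xy.
have -> : mu j ^+ 2 * dot x x * dot y y = (mu j * (sx * sy)) ^+ 2.
  by rewrite !exprMn !sqr_sqrtr ?(ip_ge0 dotP) // mulrA.
have mu0 : 0 <= mu j by rewrite -mu_j.
by rewrite -real_normK ?num_real // ler_pXn2r // nnegrE mulr_ge0 // ltW.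
Qed.

(* Moving [c j] towards [x] keeps it admissible at step [j], so the maximality
   of [mu j] kills the first-order variation [dot x (M *m e j)]. *)
Lemma singular_system_orth (j : 'I_n) x :
  (forall i : 'I_n, (i <= j)%N -> dot x (c i) = 0) -> dot x (M *m e j) = 0.
Proof.
move=> xc0; have [c1 e1 ce0 mu_j _] := hs j.
set a := dot (c j) (M *m e j); set b := dot x (M *m e j); set q := dot x x.
have le_t t : (a + t * b) ^+ 2 <= a ^+ 2 * (1 + t ^+ 2 * q).
  have -> : a + t * b = dot (c j + t *: x) (M *m e j) by rewrite (ipDl dotP) (ipZl dotP).
  have -> : a ^+ 2 * (1 + t ^+ 2 * q) =
      a ^+ 2 * dot (c j + t *: x) (c j + t *: x) * dot (e j) (e j).
    rewrite e1 mulr1 !(ipDl dotP, ipDr dotP, ipZl dotP, ipZr dotP) c1.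
    by rewrite (ipC dotP (c j)) xc0 // /q; ring.
  rewrite -(real_normK (num_real a)) mu_j; apply: singular_system_bound => i ij.
  have [cc0 ee0] := ce0 i ij.
  by rewrite (ipDl dotP) (ipZl dotP) cc0 xc0 1?ltnW // mulr0 addr0.
have /eqP : a * b = 0.
  by apply: (linear_quadratic_le0 (b := (b ^+ 2 - a ^+ 2 * q) / 2)) => t; have := le_t t; nra.
rewrite mulf_eq0 => /orP[/eqP a0|/eqP //].
apply/eqP; rewrite -sqrf_eq0 eq_le sqr_ge0 andbT.
by have := le_t 1; rewrite a0; nra.
Qed.

End Properties.

Lemma singular_system_offdiag M mu c e : singular_system M mu c e ->
  forall i k : 'I_n, i != k -> dot (c i) (M *m e k) = 0.
Proof.
move=> hs i k; have hsT := singular_system_tr hs.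
have oc := singular_system_orthonormal hs; have oe := singular_system_orthonormal hsT.
have [ik|ki|/val_inj->] := ltngtP i k; last by rewrite eqxx.
- move=> _; rewrite (ipC dotP) -[M]trmxK -dot_mulmx.
  apply: (singular_system_orth hsT) => l li; apply: (orthonormal_neq oe).
  by apply: contraTneq ik => ->; rewrite -leqNgt.
- move=> _; apply: (singular_system_orth hs) => l lk; apply: (orthonormal_neq oc).
  by apply: contraTneq ki => ->; rewrite -leqNgt.
Qed.

Lemma singular_system_eigen M mu c e : singular_system M mu c e ->
  forall j, (M *m M^T) *m c j = mu j ^+ 2 *: c j.
Proof.
move=> hs j; have [_ _ _ mu_j _] := hs j; set a := dot (c j) (M *m e j) in mu_j *.
have oc := singular_system_orthonormal hs.
have oe := singular_system_orthonormal (singular_system_tr hs).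
have Mtc : M^T *m c j = a *: e j.
  rewrite (orthonormal_cV_expand oe (M^T *m c j)) (bigD1 j) //= big1 ?addr0 => [|k kj].
    by rewrite -dot_mulmx.
  by rewrite -dot_mulmx (singular_system_offdiag hs) 1?eq_sym ?scale0r.
have Me : M *m e j = a *: c j.
  rewrite {1}(orthonormal_cV_expand oc (M *m e j)) (bigD1 j) //= big1 ?addr0 => [|k kj].
    by rewrite (ipC dotP).
  by rewrite (ipC dotP) (singular_system_offdiag hs) ?scale0r.
by rewrite -mulmxA Mtc -scalemxAr Me scalerA -expr2 -mu_j real_normK ?num_real.
Qed.

Lemma singular_system_sqr M mu c e z (ev : 'I_n -> R) :
  singular_system M mu c e -> orthonormal_fam dot z ->
  (forall a, (M *m M^T) *m z a = ev a *: z a) ->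
  (forall a b : 'I_n, (a <= b)%N -> ev b <= ev a) ->
  forall j, mu j ^+ 2 = ev j.
Proof.
move=> hs hz Pz ev_dec j.
have mu2_dec (a b : 'I_n) : (a <= b)%N -> mu b ^+ 2 <= mu a ^+ 2.
  move=> ab; have := singular_system_nonincr hs ab.
  have [_ _ _ <- _] := hs b; have := normr_ge0 (dot (c b) (M *m e b)); nra.
have Pc := singular_system_eigen hs; have oc := singular_system_orthonormal hs.
by apply/eqP; rewrite eq_le (eigen_le oc hz Pc Pz) // (eigen_le hz oc Pz Pc).
Qed.

Lemma mulmx_tr_eigen_ge0 M x (l : R) : x != 0 -> (M *m M^T) *m x = l *: x -> 0 <= l.
Proof.
move=> x0 Px; rewrite -(pmulr_lge0 _ (ip_gt0 dotP x0)) -(ipZr dotP) -Px -mulmxA.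
by rewrite dot_mulmx (ip_ge0 dotP).
Qed.

(* The right singular vectors are the normalised [M^T *m z a]; those that
   vanish are replaced by an orthonormal completion. *)
Lemma exists_singular_system M z (ev : 'I_n -> R) :
  orthonormal_fam dot z -> (forall a, (M *m M^T) *m z a = ev a *: z a) ->
  (forall a b : 'I_n, (a <= b)%N -> ev b <= ev a) ->
  exists e, singular_system M (fun a => Num.sqrt (ev a)) z e.
Proof.
move=> hz Pz ev_dec; pose sg a := Num.sqrt (ev a).
have sg2 a : sg a ^+ 2 = ev a.
  by rewrite sqr_sqrtr // (mulmx_tr_eigen_ge0 (orthonormal_neq0 dotP hz a) (Pz a)).
have gg a b : dot (M^T *m z a) (M^T *m z b) = ev b * (a == b)%:R.
  by rewrite -dot_mulmx mulmxA Pz (ipZr dotP) hz.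
have [e he eE] : exists2 e, orthonormal_fam dot e &
    forall a, sg a != 0 -> e a = (sg a)^-1 *: (M^T *m z a).
  apply: orthonormal_extend => a b /= sa sb.
  rewrite (ipZl dotP) (ipZr dotP) gg; have [<-|] := eqVneq a b; last by rewrite !mulr0.
  by rewrite -sg2 mulr1 mulKf ?mulVf.
have Mtz a : M^T *m z a = sg a *: e a.
  have [sa0|sa] := eqVneq (sg a) 0; last by rewrite eE // scalerA divff ?scale1r.
  by rewrite sa0 scale0r; apply: (ip_eq0 dotP); rewrite gg eqxx mulr1 -sg2 sa0 expr0n.
exists e => j; split.
- by rewrite hz eqxx.
- by rewrite he eqxx.
- by move=> i ij; rewrite !(orthonormal_neq hz, orthonormal_neq he) // -val_eqE gtn_eqF.
- by rewrite dot_mulmx Mtz (ipZl dotP) he eqxx mulr1 ger0_norm ?sqrtr_ge0.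
move=> x y x1 y1 xz0.
pose U := \sum_a (dot x (z a) * sg a) *: e a.
have MtxU : M^T *m x = U.
  rewrite {1}(orthonormal_cV_expand hz x) mulmx_sumr; apply: eq_bigr => a _.
  by rewrite -scalemxAr Mtz scalerA.
have UU : dot U U <= sg j ^+ 2.
  rewrite (orthonormal_ip_sum dotP he) -[sg j ^+ 2]mulr1 -x1.
  rewrite (parseval dotP hz (orthonormal_cV_expand hz x)) mulr_sumr.
  apply: ler_sum => a _; have [aj|ja] := ltnP a j.
    by rewrite (xz0 a aj).1 !mul0r expr0n mulr0.
  by rewrite -expr2 exprMn mulrC ler_wpM2r ?sqr_ge0 // !sg2 ev_dec.
have := cauchy_schwarz dotP U y; rewrite y1 mulr1 => /le_trans /(_ UU).
rewrite dot_mulmx MtxU -(real_normK (num_real (dot U y))) ler_pXn2r //.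
by rewrite nnegrE sqrtr_ge0.
Qed.

End SingularSystem.

(** * Principal systems in orthonormal coordinates *)

Lemma acos_le_pihalf (R : realType) (x : R) : 0 <= x <= 1 -> acos x <= pi / 2.
Proof.
move=> /andP [x0 x1]; have [/andP [a0 api] ca] := @acos_def _ x ltac:(lra).
rewrite leNgt; apply/negP => lt_pi2; have pi0 : 0 < pi :> R := pi_gt0 R.
have : 0 < sin (acos x - pi / 2) by apply: sin_gt0_pi; lra.
by have := cosDpihalf (acos x - pi / 2); rewrite subrK ca; lra.
Qed.

Lemma sin_acos_sqrt_sqr (R : realType) (x : R) : 0 <= x -> Num.sqrt x <= 1 ->
  sin (acos (Num.sqrt x)) ^+ 2 = 1 - x.
Proof.
move=> x0 sx1; have s0 := sqrtr_ge0 x; have sx2 : Num.sqrt x ^+ 2 = x := sqr_sqrtr x0.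
rewrite sin_acos; last by apply/andP; split; lra.
by rewrite sqr_sqrtr sx2 // subr_ge0 -sx2; nra.
Qed.

Section Coordinates.
Variables (R : realType) (V : lmodType R) (ip : V -> V -> R).
Hypothesis hip : inner_product ip.

Definition lincomb n (f : 'I_n -> V) (c : 'cV[R]_n) : V := \sum_i c i 0 *: f i.

Definition coords n (f : 'I_n -> V) (x : V) : 'cV[R]_n := \col_i ip x (f i).

Definition cross_gram n (f g : 'I_n -> V) : 'M[R]_n := \matrix_(i, j) ip (f i) (g j).

Lemma span_lincomb n (f : 'I_n -> V) c : span_of f (lincomb f c).
Proof. by exists (fun i => c i 0). Qed.

Lemma ip_lincomb_cross n (f g : 'I_n -> V) c e :
  ip (lincomb f c) (lincomb g e) = dot c (cross_gram f g *m e).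
Proof.
rewrite (ip_suml hip) /dot; apply: eq_bigr => i _.
rewrite (ipZl hip) (ip_sumr hip) mxE !mulr_sumr; apply: eq_bigr => j _.
by rewrite (ipZr hip) mxE [e j 0 * _]mulrC.
Qed.

Lemma principal_system_orthonormal (U W : set V) n th (u w : 'I_n -> V) :
  principal_system ip U W th u w -> orthonormal_fam ip u /\ orthonormal_fam ip w.
Proof.
by move=> hps; split; apply: (orthonormal_lt hip) => [j|i j ij];
  have [_ _ [u1 w1] uw0 _] := hps j; rewrite ?u1 ?w1 ?(uw0 i ij).1 ?(uw0 i ij).2.
Qed.

Lemma lincombK n (f : 'I_n -> V) x :
  orthonormal_fam ip f -> span_of f x -> lincomb f (coords f x) = x.
Proof.
move=> hf [c /(orthonormal_expand hip hf) xE].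
by rewrite [RHS]xE; apply: eq_bigr => i _; rewrite mxE.
Qed.

Lemma ip_lincomb n (f : 'I_n -> V) c c' :
  orthonormal_fam ip f -> ip (lincomb f c) (lincomb f c') = dot c c'.
Proof. by move=> hf; apply: (orthonormal_ip_sum hip hf). Qed.

Section Orthonormal.
Variables (n : nat) (f g : 'I_n -> V).
Hypotheses (hf : orthonormal_fam ip f) (hg : orthonormal_fam ip g).

Lemma principal_system_coords th (u w : 'I_n -> V) :
  principal_system ip (span_of f) (span_of g) th u w ->
  singular_system (cross_gram f g) (fun j => cos (th j))
    (fun j => coords f (u j)) (fun j => coords g (w j)).
Proof.
move=> hps j; have [_ _ [u1 w1] uw0 [uw_j uw_max]] := hps j.
have uE i : lincomb f (coords f (u i)) = u i by apply: lincombK hf _; have [_ []] := hps i.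
have wE i : lincomb g (coords g (w i)) = w i by apply: lincombK hg _; have [_ []] := hps i.
have ipu x i : ip (lincomb f x) (u i) = dot x (coords f (u i)) by rewrite -{1}uE ip_lincomb.
have ipw y i : ip (lincomb g y) (w i) = dot y (coords g (w i)) by rewrite -{1}wE ip_lincomb.
split.
- by rewrite -ipu uE.
- by rewrite -ipw wE.
- by move=> i /uw0; rewrite -!ipu -!ipw !uE !wE.
- by rewrite -ip_lincomb_cross uE wE.
move=> x y x1 y1 xy0; rewrite -ip_lincomb_cross; apply: uw_max.
- exact: span_lincomb.
- exact: span_lincomb.
- by rewrite ip_lincomb.
- by rewrite ip_lincomb.
- by move=> i /xy0; rewrite ipu ipw.
Qed.

Lemma singular_system_cross_gram_le1 mu c e :
  singular_system (cross_gram f g) mu c e -> forall j, mu j <= 1.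
Proof.
move=> hs j; have [c1 e1 _ <- _] := hs j.
have := cauchy_schwarz hip (lincomb f (c j)) (lincomb g (e j)).
rewrite ip_lincomb_cross !ip_lincomb // c1 e1 mulr1; set t := dot _ _ => t2.
by have := real_normK (num_real t); have := normr_ge0 t; nra.
Qed.

Lemma principal_system_lincomb mu c e :
  singular_system (cross_gram f g) mu c e ->
  principal_system ip (span_of f) (span_of g) (fun j => acos (mu j))
    (fun j => lincomb f (c j)) (fun j => lincomb g (e j)).
Proof.
move=> hs j; have [c1 e1 ce0 ce_j ce_max] := hs j.
have mu0 : 0 <= mu j by rewrite -ce_j.
have mu1 := singular_system_cross_gram_le1 hs j.
have mu_range : -1 <= mu j <= 1 by apply/andP; split; lra.
split.
- by rewrite acos_ge0 // acos_le_pihalf // mu0 mu1.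
- by split; apply: span_lincomb.
- by rewrite !ip_lincomb.
- by move=> i /ce0; rewrite !ip_lincomb.
rewrite acosK ?in_itv // ip_lincomb_cross; split => //.
move=> x y /(lincombK hf) <- /(lincombK hg) <-.
rewrite !ip_lincomb // ip_lincomb_cross => x1 y1 xy0; apply: ce_max => // i /xy0.
by rewrite !ip_lincomb.
Qed.

End Orthonormal.
End Coordinates.

(** * The truncated subspace and its image *)

Lemma widen_ord_inj n : injective (widen_ord (leqnSn n)).
Proof. by move=> i j /(congr1 val) /= /val_inj. Qed.

Lemma lift_max_widen n (i : 'I_n) : lift ord_max i = widen_ord (leqnSn n) i.
Proof. by apply: val_inj; apply: lift_max. Qed.

Section LeadingSubspaces.
Variables (R : realType) (V : lmodType R) (ip : V -> V -> R).
Hypothesis hip : inner_product ip.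
Variables (K : {linear V -> V}) (n : nat) (th : 'I_n.+1 -> R).
Variables (u v w : 'I_n.+1 -> V) (Rm : 'M[R]_n.+1) (d : 'cV[R]_n.+1).
Hypotheses (hu : orthonormal_fam ip u) (hKv : orthonormal_fam ip (fun k => K (v k))).
Hypothesis hv : forall k, span_of u (v k).
Hypothesis hcos : forall i j, ip (u i) (K (v j)) = if i == j then cos (th i) else 0.
Hypothesis hw : orthonormal_fam ip w.
Hypothesis hRup : forall i j : 'I_n.+1, (j < i)%N -> Rm i j = 0.
Hypothesis hQR : forall j, K (u j) = \sum_i Rm i j *: w i.
Hypothesis hd : w ord_max = \sum_i d i 0 *: K (v i).

Local Notation wn := (widen_ord (leqnSn n)).
Local Notation U := (fun j : 'I_n => u (wn j)).
Local Notation W := (fun i : 'I_n => w (wn i)).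
Local Notation Rt := (row' ord_max (col' ord_max Rm)).

(* The orthogonal matrix relating the orthonormal bases [K \o v] and [w] of [K S]. *)
Let Q : 'M[R]_n.+1 := \matrix_(i, k) ip (K (v k)) (w i).

Lemma K_v_expand k : K (v k) = \sum_i (\sum_j ip (v k) (u j) * Rm i j) *: w i.
Proof.
have [c vE] := hv k; rewrite [in LHS](orthonormal_expand hip hu vE) linear_sum.
transitivity (\sum_j \sum_i (ip (v k) (u j) * Rm i j) *: w i).
  apply: eq_bigr => j _; rewrite linearZ /= hQR scaler_sumr.
  by apply: eq_bigr => i _; rewrite scalerA.
by rewrite exchange_big; apply: eq_bigr => i _; rewrite scaler_suml.
Qed.

Lemma Q_entry i k : Q i k = \sum_j ip (v k) (u j) * Rm i j.
Proof. by rewrite mxE K_v_expand (orthonormal_coef hip hw). Qed.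

Lemma K_v_expand_Q k : K (v k) = \sum_i Q i k *: w i.
Proof. by rewrite {1}K_v_expand; apply: eq_bigr => i _; rewrite Q_entry. Qed.

Lemma Q_orthogonal : Q^T *m Q = 1%:M.
Proof.
apply/matrixP => k l; rewrite !mxE -hKv K_v_expand_Q (K_v_expand_Q l).
by rewrite (orthonormal_ip_sum hip hw); apply: eq_bigr => i _; rewrite !mxE.
Qed.

Lemma w_expand i : w i = \sum_k ip (w i) (K (v k)) *: K (v k).
Proof.
have w_span : span_of w `<=` span_of (fun k => K (v k)).
  apply: (sub_span_orthonormal hip hKv) => k.
  by exists (fun i => Q i k); apply: K_v_expand_Q.
by have [c /(orthonormal_expand hip hKv)] := w_span _ (mem_span_of w i).
Qed.

Lemma ip_u_w j i : ip (u j) (w i) = Q i j * cos (th j).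
Proof.
rewrite w_expand (ip_sumr hip) (bigD1 j) //= big1 ?addr0 => [|k kj].
  by rewrite (ipZr hip) hcos eqxx mxE (ipC hip).
by rewrite (ipZr hip) hcos eq_sym (negbTE kj) mulr0.
Qed.

Lemma d_last k : d k 0 = Q ord_max k.
Proof. by rewrite mxE (ipC hip) hd (orthonormal_coef hip hKv). Qed.

(* [Q = Rm B^T] is orthogonal, so the triangular [Rm] has a nonzero diagonal. *)
Lemma unitmx_leading_R : Rt \in unitmx.
Proof.
have Q_R : Q = Rm *m (\matrix_(k, j) ip (v k) (u j))^T.
  by apply/matrixP => i k; rewrite Q_entry !mxE; apply: eq_bigr => j _; rewrite !mxE mulrC.
have detR : \det Rm != 0.
  apply/eqP => detR0; have /eqP := congr1 determinant Q_orthogonal.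
  by rewrite det_mulmx det_tr Q_R det_mulmx detR0 !mul0r det1 eq_sym oner_eq0.
have Rm_trig : is_trig_mx Rm^T by apply/is_trig_mxP => i j ij; rewrite mxE hRup.
have Rii i : Rm i i != 0.
  by move: detR; rewrite -det_tr (det_trig Rm_trig) => /prodf_neq0/(_ i isT); rewrite mxE.
rewrite unitmxE unitfE -det_tr det_trig; last first.
  by apply/is_trig_mxP => i j ij; rewrite !mxE hRup // !lift_max.
by apply/prodf_neq0 => i _; rewrite !mxE.
Qed.

Lemma K_lincomb c : K (lincomb U c) = lincomb W (Rt *m c).
Proof.
rewrite linear_sum; transitivity (\sum_j \sum_i (Rm (wn i) (wn j) * c j 0) *: w (wn i)).
  apply: eq_bigr => j _; rewrite linearZ /= hQR big_ord_recr /=.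
  rewrite (@hRup ord_max (wn j) (ltn_ord j)) scale0r addr0 scaler_sumr.
  by apply: eq_bigr => i _; rewrite scalerA mulrC.
rewrite exchange_big; apply: eq_bigr => i _; rewrite mxE scaler_suml.
by apply: eq_bigr => j _; rewrite !mxE !lift_max_widen.
Qed.

Lemma image_span_leading : K @` span_of U = span_of W.
Proof.
have hW := orthonormal_comp hw (@widen_ord_inj n).
apply/seteqP; split => [_ [_ [c ->] <-]|y /(lincombK hip hW) <-].
  have -> : \sum_j c j *: u (wn j) = lincomb U (\col_j c j).
    by apply: eq_bigr => j _; rewrite mxE.
  by rewrite K_lincomb; apply: span_lincomb.
exists (lincomb U (invmx Rt *m coords ip W y)); first exact: span_lincomb.
by rewrite K_lincomb mulKVmx // unitmx_leading_R.
Qed.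

Lemma Q_cols_leading a b :
  \sum_(i < n) Q (wn i) a * Q (wn i) b = (a == b)%:R - d a 0 * d b 0.
Proof.
have /matrixP /(_ a b) := Q_orthogonal; rewrite !mxE big_ord_recr /= mxE !d_last => <-.
by rewrite addrK; apply: eq_bigr => i _; rewrite !mxE.
Qed.

Lemma cross_gram_leading_mul_tr :
  let Lcos := diag_mx (\row_i cos (th i)) in let Lsin := diag_mx (\row_i sin (th i)) in
  let G := cross_gram ip U W in
  G *m G^T = 1%:M - row' ord_max (col' ord_max (Lsin *m Lsin + (Lcos *m d) *m (Lcos *m d)^T)).
Proof.
move=> Lcos Lsin G; rewrite {}/G {}/Lsin {}/Lcos; apply/matrixP => j l.
rewrite mulmx_diag !mul_diag_mx !mxE big_ord1 !mxE !lift_max_widen.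
transitivity (cos (th (wn j)) * cos (th (wn l)) *
    \sum_(i < n) Q (wn i) (wn j) * Q (wn i) (wn l)).
  by rewrite mulr_sumr; apply: eq_bigr => i _; rewrite !mxE !ip_u_w !mxE; ring.
rewrite Q_cols_leading (inj_eq (@widen_ord_inj n)) -expr2; case: eqP => [->|_].
  by rewrite !mulr1n sin2cos2; ring.
by rewrite !mulr0n; ring.
Qed.

End LeadingSubspaces.

Unset Implicit Arguments.

Theorem theorem4 (R : realType) (V : lmodType R) (ip : V -> V -> R)
  (hip : inner_product ip) (K : {linear V -> V}) (S : set V) (n : nat)
  (hS : has_dim S n.+1) (hKS : has_dim (K @` S) n.+1)
  (th : 'I_n.+1 -> R) (u v : 'I_n.+1 -> V)
  (hvS : forall i, S (v i))
  (hprinc : principal_system ip S (K @` S) th u (fun i => K (v i)))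
  (hcos : forall i j, ip (u i) (K (v j)) = if i == j then cos (th i) else 0)
  (w : 'I_n.+1 -> V) (Rm : 'M[R]_n.+1)
  (hw : forall i j, ip (w i) (w j) = (i == j)%:R)
  (hRup : forall i j : 'I_n.+1, (j < i)%N -> Rm i j = 0)
  (hQR : forall j, K (u j) = \sum_(i < n.+1) Rm i j *: w i)
  (d : 'cV[R]_n.+1)
  (hd : w ord_max = \sum_(i < n.+1) d i 0 *: K (v i))
  (lam : 'I_n -> R) (z : 'I_n -> 'cV[R]_n) :
  let Lcos : 'M[R]_n.+1 := diag_mx (\row_i cos (th i)) in
  let Lsin : 'M[R]_n.+1 := diag_mx (\row_i sin (th i)) in
  let N1 : 'M[R]_n.+1 := Lsin *m Lsin + (Lcos *m d) *m (Lcos *m d)^T in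
  let N1t : 'M[R]_n := row' ord_max (col' ord_max N1) in
  (forall a b : 'I_n, (a <= b)%N -> lam a <= lam b) ->
  (forall a b : 'I_n, (z a)^T *m z b = (a == b)%:R%:M) ->
  (forall a : 'I_n, N1t *m z a = lam a *: z a) ->
  let Unm1 : 'I_n -> V := fun j => u (widen_ord (leqnSn n) j) in
  let Snew := span_of Unm1 in
  let KSnew := K @` Snew in
  let unew : 'I_n -> V := fun a => \sum_(j < n) z a j 0 *: Unm1 j in
  (forall (th' : 'I_n -> R) (u' w' : 'I_n -> V),
      principal_system ip Snew KSnew th' u' w' ->
      forall a, sin (th' a) ^+ 2 = lam a) /\
  (exists (th' : 'I_n -> R) (w' : 'I_n -> V),
      principal_system ip Snew KSnew th' unew w' /\
      forall a, sin (th' a) ^+ 2 = lam a).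
Proof.
move=> Lcos Lsin N1 N1t lam_incr z_on Nz Unm1 Snew KSnew unew.
pose W i := w (widen_ord (leqnSn n) i).
have [hu hKv] := principal_system_orthonormal hip hprinc.
have S_u : S `<=` span_of u.
  by apply: (has_dim_sub_span hip hu hS) => j; have [_ []] := hprinc j.
have hv k : span_of u (v k) := S_u _ (hvS k).
have hU := orthonormal_comp hu (@widen_ord_inj n).
have hW : orthonormal_fam ip W := orthonormal_comp hw (@widen_ord_inj n).
have KSnewE : KSnew = span_of W := image_span_leading hip hu hKv hv hw hRup hQR.
pose G := cross_gram ip Unm1 W.
have GGt : G *m G^T = 1%:M - N1t := cross_gram_leading_mul_tr hip hu hKv hv hcos hw hQR hd.
have hz : orthonormal_fam dot z by move=> a b; rewrite dotE z_on mxE eqxx mulr1n.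
have Gz a : (G *m G^T) *m z a = (1 - lam a) *: z a.
  by rewrite GGt mulmxBl mul1mx Nz scalerBl scale1r.
have ev_dec (a b : 'I_n) : (a <= b)%N -> 1 - lam b <= 1 - lam a.
  by move=> ab; rewrite lerB // lam_incr.
rewrite KSnewE; split.
  move=> th' u' w' /(principal_system_coords hip hU hW) hs a.
  by rewrite sin2cos2 (singular_system_sqr hs hz Gz ev_dec a); ring.
have [e he] := exists_singular_system hz Gz ev_dec.
exists (fun a => acos (Num.sqrt (1 - lam a))), (fun a => lincomb W (e a)).
split=> [|a]; first exact (principal_system_lincomb hip hU hW he).
rewrite sin_acos_sqrt_sqr; first ring.
- exact: mulmx_tr_eigen_ge0 (orthonormal_neq0 (dot_inner_product _ _) hz a) (Gz a).
- exact (singular_system_cross_gram_le1 hip hU hW he a).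
Qed.
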